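(* Let $K$ be a field and $\beta<\alpha$ countable ordinals. Then there is a $K$-algebra isomorphism $B_{\alpha,1}\cong B_{\beta,1}\boxplus B_{\alpha,1}$.
   Context: For a sequence $\mathcal R=(R_i\mid i\in A)$ of $K$-algebras indexed by an infinite set $A$, $R(A,K,\mathcal R)$ is the $K$-subalgebra $\bigoplus_{i\in A}R_i\oplus1_P\cdot K$ of $P=\prod_{i\in A}R_i$; $\boxplus$ is ring direct product. Define $B_{0,1}=K$; $B_{\beta+1,1}=R(\aleph_0,K,\mathcal R)$ with $\mathcal R$ the constant sequence $R_m=B_{\beta,1}$ ($m<\aleph_0$); for limit $\alpha$, $B_{\alpha,1}=R(\alpha,K,(B_{\beta,1}\mid\beta<\alpha))$. *)

From Stdlib Require Import List ClassicalEpsilon.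
From mathcomp Require Import all_boot all_algebra.
Set Implicit Arguments. Unset Strict Implicit. Unset Printing Implicit Defensive.
Import GRing.Theory.
Local Open Scope ring_scope.

(* A (concrete) K-algebra presented as a subset [mem] of an ambient type [car]
   carrying pointwise operations (e.g. a subalgebra of a product algebra). *)
Record kalg (K : fieldType) := KAlg {
  car : Type;
  mem : car -> Prop;
  kzero : car;
  kone : car;
  kadd : car -> car -> car;
  kmul : car -> car -> car;
  kscale : K -> car -> car }.
Arguments car {K} k.
Arguments mem {K} k _.
Arguments kzero {K} k.
Arguments kone {K} k.
Arguments kadd {K} k _ _.
Arguments kmul {K} k _ _.
Arguments kscale {K} k _ _.

Section Constructions.
Variable K : fieldType.

Definition kalgK : kalg K :=
  @KAlg K K (fun _ => True) 0 1 +%R *%R *%R.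

Definition kprod (R S : kalg K) : kalg K :=
  @KAlg K (car R * car S)%type
    (fun x => mem R x.1 /\ mem S x.2)
    (kzero R, kzero S) (kone R, kone S)
    (fun x y => (kadd R x.1 y.1, kadd S x.2 y.2))
    (fun x y => (kmul R x.1 y.1, kmul S x.2 y.2))
    (fun k x => (kscale R k x.1, kscale S k x.2)).

(* R(I, K, (R_i)) = (⊕_i R_i) ⊕ 1_P·K  inside  P = ∏_i R_i. *)
Definition Rsum (I : Type) (F : I -> kalg K) : kalg K :=
  @KAlg K (forall i, car (F i))
    (fun f => exists (g : forall i, car (F i)) (k : K) (s : list I),
        (forall i, mem (F i) (g i)) /\
        (forall i, ~ In i s -> g i = kzero (F i)) /\
        (forall i, f i = kadd (F i) (g i) (kscale (F i) k (kone (F i)))))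
    (fun i => kzero (F i)) (fun i => kone (F i))
    (fun f g i => kadd (F i) (f i) (g i))
    (fun f g i => kmul (F i) (f i) (g i))
    (fun k f i => kscale (F i) k (f i)).

Definition kalg_iso (R S : kalg K) : Prop :=
  exists phi : car R -> car S,
    (forall x, mem R x -> mem S (phi x)) /\
    (forall x y, mem R x -> mem R y -> phi x = phi y -> x = y) /\
    (forall y, mem S y -> exists x, mem R x /\ phi x = y) /\
    phi (kone R) = kone S /\
    (forall x y, mem R x -> mem R y -> phi (kadd R x y) = kadd S (phi x) (phi y)) /\
    (forall x y, mem R x -> mem R y -> phi (kmul R x y) = kmul S (phi x) (phi y)) /\
    (forall k x, mem R x -> phi (kscale R k x) = kscale S k (phi x)).

(* Ordinals: a countable ordinal alpha is the order type of a well-ordered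
   type (A, lt); the ordinals <= alpha are indexed by option A, where
   Some a stands for the order type of {x | lt x a} and None for alpha. *)
Variables (A : Type) (lt : A -> A -> Prop).

Definition ltO (v w : option A) : Prop :=
  match v, w with
  | Some a, Some b => lt a b
  | Some _, None => True
  | None, _ => False
  end.

Lemma wf_ltO : well_founded lt -> well_founded ltO.
Proof.
intro wf.
assert (H : forall a, Acc ltO (Some a)).
{ intro a. induction (wf a) as [a _ IH]. constructor.
  intros [y|] Hy; [ apply IH; exact Hy | destruct Hy ]. }
intros [a|]; [ apply H | ].
constructor. intros [y|] Hy; [ apply H | destruct Hy ].
Qed.

(* One step of the transfinite recursion defining B_{w,1}:
   w = 0 (no predecessor): K;  w = m+1 (largest predecessor m):
   R(aleph_0, K, constant B_m);  w limit: R(w, K, (B_v | v < w)). *)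
Definition Bstep (w : option A) (rec : forall v, ltO v w -> kalg K) : kalg K :=
  match excluded_middle_informative (exists v, ltO v w) with
  | right _ => kalgK
  | left _ =>
    match excluded_middle_informative
            (exists m, ltO m w /\ forall v, ltO v w -> ~ ltO m v) with
    | left H =>
        let m := constructive_indefinite_description _ H in
        Rsum (fun _ : nat => rec (proj1_sig m) (proj1 (proj2_sig m)))
    | right _ =>
        Rsum (fun v : {v | ltO v w} => rec (proj1_sig v) (proj2_sig v))
    end
  end.

Definition B1 (wf : well_founded lt) (w : option A) : kalg K :=
  Fix (wf_ltO wf) (fun _ => kalg K) Bstep w.

End Constructions.

(* Two absorption facts drive an induction on w.  If F_j ≅ G ⊞ F_j then
   R(I, K, F) ≅ G ⊞ R(I, K, F), by applying that isomorphism in coordinate j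
   only; and R(N, K, F) ≅ F ⊞ R(N, K, F) for a constant family, by splitting
   off the head coordinate.  Now let v < w.  If w = m + 1 then
   B_w = R(N, K, B_m), and either v = m (second fact) or v < m and
   B_m ≅ B_v ⊞ B_m by induction (first fact at j = 0).  If w is a limit,
   some u satisfies v < u < w, and the first fact applies at j = u. *)

From Pilot Require Import Defs.
From Stdlib Require Import List ClassicalEpsilon FunctionalExtensionality.
From Stdlib Require Eqdep.
From mathcomp Require Import all_boot all_algebra.
Set Implicit Arguments. Unset Strict Implicit. Unset Printing Implicit Defensive.
Import GRing.Theory.
Local Open Scope ring_scope.

Notation kmem := Pilot.Defs.mem.

Section Update.
Variables (I : Type) (P : I -> Type).

Definition upd (f : forall i, P i) (j : I) (x : P j) : forall i, P i :=
  fun i => match excluded_middle_informative (j = i) with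
           | left e => eq_rect j P x i e
           | right _ => f i
           end.
Arguments upd f j x i : clear implicits.

Lemma upd_eq f j x : upd f j x j = x.
Proof.
rewrite /upd; case: excluded_middle_informative => [e|//].
by rewrite (Eqdep.EqdepTheory.UIP_refl _ _ e).
Qed.

Lemma upd_neq f j x i : j <> i -> upd f j x i = f i.
Proof. by rewrite /upd; case: excluded_middle_informative. Qed.

Lemma upd_ext f g j x y :
  x = y -> (forall i, j <> i -> f i = g i) -> upd f j x = upd g j y.
Proof.
move=> exy efg; apply: functional_extensionality_dep => i.
by case: (excluded_middle_informative (j = i)) => [<-|ne]; rewrite ?upd_eq ?upd_neq ?efg.
Qed.

Lemma upd_id f j : upd f j (f j) = f.
Proof.
apply: functional_extensionality_dep => i.
by case: (excluded_middle_informative (j = i)) => [<-|ne]; rewrite ?upd_eq ?upd_neq.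
Qed.

Lemma upd_upd f j x y : upd (upd f j x) j y = upd f j y.
Proof. by apply: upd_ext => // i ne; rewrite upd_neq. Qed.

Lemma upd_map (op : forall i, P i -> P i) f j x :
  upd (fun i => op i (f i)) j (op j x) = fun i => op i (upd f j x i).
Proof.
apply: functional_extensionality_dep => i.
by case: (excluded_middle_informative (j = i)) => [<-|ne]; rewrite ?upd_eq ?upd_neq.
Qed.

Lemma upd_map2 (op : forall i, P i -> P i -> P i) f g j x y :
  upd (fun i => op i (f i) (g i)) j (op j x y) =
  fun i => op i (upd f j x i) (upd g j y i).
Proof.
apply: functional_extensionality_dep => i.
by case: (excluded_middle_informative (j = i)) => [<-|ne]; rewrite ?upd_eq ?upd_neq.
Qed.

End Update.
Arguments upd {I P} f j x i.

Section RsumIso.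
Variable K : fieldType.

Record kalg_lmod (R : kalg K) : Prop := {
  kaddA : forall x y z, kadd R x (kadd R y z) = kadd R (kadd R x y) z;
  kaddC : forall x y, kadd R x y = kadd R y x;
  kadd0 : forall x, kadd R (kzero R) x = x;
  kscaleDr : forall a x y,
    kscale R a (kadd R x y) = kadd R (kscale R a x) (kscale R a y);
  kscaleDl : forall a b x,
    kscale R (a + b) x = kadd R (kscale R a x) (kscale R b x);
  kscaleA : forall a b x, kscale R a (kscale R b x) = kscale R (a * b) x;
  kscale0 : forall x, kscale R 0 x = kzero R;
  kscale1 : forall x, kscale R 1 x = x;
  mem_kone : kmem R (kone R);
  mem_kadd : forall x y, kmem R x -> kmem R y -> kmem R (kadd R x y);
  mem_kscale : forall a x, kmem R x -> kmem R (kscale R a x) }.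

Lemma kscalez R (HR : kalg_lmod R) a : kscale R a (kzero R) = kzero R.
Proof. by rewrite -(kscale0 HR (kone R)) (kscaleA HR) mulr0. Qed.

Lemma mem_kzero R (HR : kalg_lmod R) : kmem R (kzero R).
Proof. by rewrite -(kscale0 HR (kone R)); apply/(mem_kscale HR)/(mem_kone HR). Qed.

Lemma kaddNK R (HR : kalg_lmod R) a x y :
  kadd R (kadd R x (kscale R (- a) y)) (kscale R a y) = x.
Proof.
by rewrite -(kaddA HR) -(kscaleDl HR) addNr (kscale0 HR) (kaddC HR) (kadd0 HR).
Qed.

Lemma kalg_lmodK : kalg_lmod (kalgK K).
Proof.
constructor=> //= *.
- by rewrite addrA.
- by rewrite addrC.
- by rewrite add0r.
- by rewrite mulrDr.
- by rewrite mulrDl.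
- by rewrite mulrA.
- by rewrite mul0r.
- by rewrite mul1r.
Qed.

Section Rsum.
Variables (I : Type) (F : I -> kalg K).
Hypothesis HF : forall i, kalg_lmod (F i).

Lemma kalg_lmod_Rsum : kalg_lmod (Rsum F).
Proof.
constructor=> /=.
- by move=> *; apply: functional_extensionality_dep => i; rewrite (kaddA (HF i)).
- by move=> *; apply: functional_extensionality_dep => i; rewrite (kaddC (HF i)).
- by move=> *; apply: functional_extensionality_dep => i; rewrite (kadd0 (HF i)).
- by move=> *; apply: functional_extensionality_dep => i; rewrite (kscaleDr (HF i)).
- by move=> *; apply: functional_extensionality_dep => i; rewrite (kscaleDl (HF i)).
- by move=> *; apply: functional_extensionality_dep => i; rewrite (kscaleA (HF i)).
- by move=> *; apply: functional_extensionality_dep => i; rewrite (kscale0 (HF i)).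
- by move=> *; apply: functional_extensionality_dep => i; rewrite (kscale1 (HF i)).
- exists (fun i => kzero (F i)), 1, nil; split; [|split] => [i|//|i].
  + exact: mem_kzero.
  + by rewrite (kscale1 (HF i)) (kadd0 (HF i)).
- move=> f f' [g [k [s [Hg [Hs Hf]]]]] [g' [k' [s' [Hg' [Hs' Hf']]]]].
  exists (fun i => kadd (F i) (g i) (g' i)), (k + k'), (s ++ s').
  split; [|split] => i.
  + exact: mem_kadd.
  + rewrite in_app_iff => /Decidable.not_or [/Hs -> /Hs' ->].
    exact: kadd0.
  + rewrite Hf Hf' (kscaleDl (HF i)) -!(kaddA (HF i)); congr (kadd _ _ _).
    by rewrite !(kaddA (HF i)) [kadd _ (kscale _ k _) _](kaddC (HF i)).
- move=> a f [g [k [s [Hg [Hs Hf]]]]].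
  exists (fun i => kscale (F i) a (g i)), (a * k), s; split; [|split] => i.
  + exact: mem_kscale.
  + by move/Hs->; rewrite kscalez.
  + by rewrite Hf (kscaleDr (HF i)) (kscaleA (HF i)).
Qed.

Lemma mem_Rsum_coord f : kmem (Rsum F) f -> forall i, kmem (F i) (f i).
Proof.
move=> [g [k [s [Hg [_ Hf]]]]] i; rewrite Hf.
by apply: mem_kadd => //; apply/mem_kscale/mem_kone.
Qed.

Lemma mem_Rsum_upd h j y :
  kmem (Rsum F) h -> kmem (F j) y -> kmem (Rsum F) (upd h j y).
Proof.
move=> [g [k [s [Hg [Hs Hh]]]]] Hy.
exists (upd g j (kadd (F j) y (kscale (F j) (- k) (kone (F j))))), k, (j :: s).
split; [|split] => i.
- case: (excluded_middle_informative (j = i)) => [<-|ne]; rewrite ?upd_eq ?upd_neq //.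
  by apply: mem_kadd => //; apply/mem_kscale/mem_kone.
- by move=> /Decidable.not_or [ne /Hs <-]; rewrite upd_neq.
- case: (excluded_middle_informative (j = i)) => [<-|ne].
  + by rewrite !upd_eq kaddNK.
  + by rewrite !upd_neq.
Qed.

Lemma iso_Rsum_absorb (G : kalg K) j :
  kalg_iso (F j) (kprod G (F j)) -> kalg_iso (Rsum F) (kprod G (Rsum F)).
Proof.
case=> psi [psi_mem [psi_inj [psi_surj [psi1 [psiD [psiM psiZ]]]]]].
have memF := mem_Rsum_coord.
exists (fun f => ((psi (f j)).1, upd f j (psi (f j)).2)).
split; [|split; [|split; [|split; [|split; [|split]]]]].
- move=> f Hf; have [HG Hj] := psi_mem _ (memF f Hf j).
  by split=> //; apply: mem_Rsum_upd.
- move=> f f' Hf Hf' [E1 E2].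
  have Ej : f j = f' j.
    have E3 := f_equal (fun h => h j) E2; rewrite /= !upd_eq in E3.
    apply: psi_inj; [exact: memF | exact: memF |].
    by rewrite [psi (f j)]surjective_pairing [psi (f' j)]surjective_pairing E1 E3.
  by rewrite -(upd_id f j) -(upd_id f' j) -(upd_upd f (psi (f j)).2) E2 upd_upd Ej.
- move=> [x h] [/= Hx Hh].
  have [y [Hy Ey]] := psi_surj (x, h j) (conj Hx (memF h Hh j)).
  exists (upd h j y); split; first exact: mem_Rsum_upd.
  by rewrite upd_eq Ey upd_upd upd_id.
- by rewrite /= psi1 upd_id.
- move=> f f' Hf Hf' /=; rewrite psiD; [|exact: memF..] => /=.
  by congr (_, _); apply: (upd_map2 (fun i => kadd (F i))).
- move=> f f' Hf Hf' /=; rewrite psiM; [|exact: memF..] => /=.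
  by congr (_, _); apply: (upd_map2 (fun i => kmul (F i))).
- move=> a f Hf /=; rewrite psiZ; [|exact: memF] => /=.
  by congr (_, _); apply: (upd_map (fun i => kscale (F i) a)).
Qed.

End Rsum.

Section RsumNat.
Variable F : kalg K.
Hypothesis HF : kalg_lmod F.

Lemma mem_Rsum_nat_behead f :
  kmem (Rsum (fun _ : nat => F)) f -> kmem (Rsum (fun _ : nat => F)) (fun n => f n.+1).
Proof.
move=> [g [k [s [Hg [Hs Hf]]]]].
exists (fun n => g n.+1), k, (map predn s); split; [|split] => n //.
by move=> Hn; apply: Hs => /(in_map predn).
Qed.

Lemma mem_Rsum_nat_cons x h : kmem F x -> kmem (Rsum (fun _ : nat => F)) h ->
  kmem (Rsum (fun _ : nat => F)) (fun n => if n is m.+1 then h m else x).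
Proof.
move=> Hx [g [k [s [Hg [Hs Hh]]]]].
exists (fun n => if n is m.+1 then g m else kadd F x (kscale F (- k) (kone F))), k,
  (0%N :: map S s).
split; [|split] => -[|m] //=.
- by apply: mem_kadd => //; apply/mem_kscale/mem_kone.
- by case; left.
- by move=> /Decidable.not_or [_ Hm]; apply: Hs => /(in_map S).
- by rewrite kaddNK.
Qed.

Lemma iso_Rsum_nat_head :
  kalg_iso (Rsum (fun _ : nat => F)) (kprod F (Rsum (fun _ : nat => F))).
Proof.
exists (fun f => (f 0%N, fun n => f n.+1)).
split; [|split; [|split; [|split; [|split; [|split]]]]] => //.
- move=> f Hf; split; first exact: (mem_Rsum_coord (fun _ => HF) Hf).
  exact: mem_Rsum_nat_behead.
- move=> f f' _ _ [E0 ES]; apply: functional_extensionality_dep => -[|n] //.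
  exact: (f_equal (fun h => h n) ES).
- move=> [x h] [/= Hx Hh].
  by exists (fun n => if n is m.+1 then h m else x); split; first exact: mem_Rsum_nat_cons.
Qed.

End RsumNat.
End RsumIso.

Section Tower.
Variables (K : fieldType) (A : Type) (lt : A -> A -> Prop) (wf : well_founded lt).

Lemma B1_unfold w : B1 K wf w = @Bstep K A lt w (fun v _ => B1 K wf v).
Proof.
apply: (Fix_eq (wf_ltO wf) (fun _ => kalg K)) => x f g efg.
by have -> : f = g by do 2 apply: functional_extensionality_dep => ?.
Qed.

Lemma kalg_lmod_B1 w : kalg_lmod (B1 K wf w).
Proof.
elim/(well_founded_ind (wf_ltO wf)): w => w IH.
rewrite B1_unfold /Bstep.
case: excluded_middle_informative => _; last exact: kalg_lmodK.
case: excluded_middle_informative => [Hm|_]; apply: kalg_lmod_Rsum.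
- by move=> _; apply/IH/(proj1 (proj2_sig (constructive_indefinite_description _ Hm))).
- by move=> [v Hv]; apply: IH.
Qed.

Hypothesis lt_total : forall x y, lt x y \/ x = y \/ lt y x.

Lemma ltO_total (x y : option A) : ltO lt x y \/ x = y \/ ltO lt y x.
Proof.
case: x y => [x|] [y|] /=; auto.
by case: (lt_total x y) => [|[->|]]; auto.
Qed.

Lemma B1_absorb_lower w v :
  ltO lt v w -> kalg_iso (B1 K wf w) (kprod (B1 K wf v) (B1 K wf w)).
Proof.
elim/(well_founded_ind (wf_ltO wf)): w v => w IH v Hvw.
rewrite B1_unfold /Bstep.
case: excluded_middle_informative => [_|[]]; last by exists v.
case: excluded_middle_informative => [Hm|Hlim] /=.
- case: (constructive_indefinite_description _ Hm) => m [Hmw Hmax] /=.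
  case: (ltO_total v m) => [Hvm|[->|Hmv]].
  + exact: (iso_Rsum_absorb (fun _ => kalg_lmod_B1 m) (j := 0%N) (IH m Hmw v Hvm)).
  + exact/iso_Rsum_nat_head/kalg_lmod_B1.
  + by case: (Hmax v Hvw).
- have [u [Huw Hvu]] : exists u, ltO lt u w /\ ltO lt v u.
    apply: NNPP => Hno; apply: Hlim; exists v; split=> // u Huw Hvu.
    by apply: Hno; exists u.
  exact: (iso_Rsum_absorb (fun u => kalg_lmod_B1 (proj1_sig u))
            (j := exist _ u Huw) (IH u Huw v Hvu)).
Qed.

End Tower.

Theorem corollary6p10 (K : fieldType) (A : Type) (lt : A -> A -> Prop)
    (wf : well_founded lt)
    (lt_trans : forall x y z, lt x y -> lt y z -> lt x z)
    (lt_total : forall x y, lt x y \/ x = y \/ lt y x)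
    (A_countable : exists f : A -> nat, forall x y, f x = f y -> x = y)
    (b : A) :
  kalg_iso (B1 K wf None) (kprod (B1 K wf (Some b)) (B1 K wf None)).
Proof.
exact: (@B1_absorb_lower K A lt wf lt_total None (Some b) I).
Qed.
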